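(* Let $M=(E,r)$ be a matroid with $|E|\ge 2$ and let $e\in E$. Then (i) if $e$ is neither a loop nor a coloop, $Q'_M(x,y)=x\,Q'_{M\setminus e}(x,y)+y\,Q'_{M/e}(x,y)$; (ii) if $e$ is a loop or a coloop, $Q'_M(x,y)=(x+y-1)\,Q'_{M/e}(x,y)=(x+y-1)\,Q'_{M\setminus e}(x,y)$.
   Context: $M\setminus e$ and $M/e$ denote the usual matroid deletion and contraction (matroids on $E\setminus\{e\}$). For a polymatroid (in particular a matroid) $N$ on a nonempty ground set $F$, with base polytope $P(N)\subseteq\mathbb R^F$ (for a matroid, the convex hull of indicator vectors of bases), let $\Delta_F=\operatorname{conv}\{\mathbf e_i:i\in F\}$, $\nabla_F=-\Delta_F$, and $Q_N(t,u)=\#\big((P(N)+u\Delta_F+t\nabla_F)\cap\mathbb Z^F\big)$ for integers $t,u\ge0$. This is a polynomial; write $Q_N(t,u)=\sum_{i,j}c_{ij}\binom{u}{j}\binom{t}{i}$ and define $Q'_N(x,y)=\sum_{i,j}c_{ij}(x-1)^i(y-1)^j$. *)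

From HB Require Import structures.
From mathcomp Require Import all_boot all_order all_algebra.
Set Implicit Arguments. Unset Strict Implicit. Unset Printing Implicit Defensive.
Import Order.TTheory GRing.Theory Num.Theory.
Local Open Scope ring_scope.

(* A matroid (F, r): ground set F : {set T} inside a finite type T, rank
   function r (only its values on subsets of F matter). Rank axioms. *)
Definition is_matroid (T : finType) (F : {set T}) (r : {set T} -> nat) : Prop :=
  [/\ forall X : {set T}, X \subset F -> (r X <= #|X|)%N,
      forall X Y : {set T}, Y \subset F -> X \subset Y -> (r X <= r Y)%N &
      forall X Y : {set T}, X \subset F -> Y \subset F ->
        (r (X :|: Y) + r (X :&: Y) <= r X + r Y)%N].

Definition bases (T : finType) (F : {set T}) (r : {set T} -> nat) : {set {set T}} :=
  [set X : {set T} | [&& X \subset F, #|X| == r X & r X == r F]].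

(* Deletion M \ e has ground set F :\ e and the same rank function;
   contraction M / e has ground set F :\ e and rank X |-> r(X ∪ e) - r({e}). *)
Definition contr_rank (T : finType) (r : {set T} -> nat) (e : T) : {set T} -> nat :=
  fun X => (r (e |: X) - r [set e])%N.

Definition is_loop (T : finType) (r : {set T} -> nat) (e : T) : Prop := r [set e] = 0%N.
Definition is_coloop (T : finType) (F : {set T}) (r : {set T} -> nat) (e : T) : Prop :=
  (r (F :\ e) < r F)%N.

(* Integer point z of R^F (encoded as a function T -> int vanishing off F)
   lying in P(N) + u Δ_F + t ∇_F, where P(N) = conv{1_B : B basis},
   Δ_F = conv{e_i : i ∈ F}, ∇_F = -Δ_F; all convex hulls written out as
   sets of convex combinations, with real coefficients in R. *)
Definition in_QP (R : realFieldType) (T : finType) (F : {set T})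
    (Bs : {set {set T}}) (t u : nat) (z : {ffun T -> int}) : Prop :=
  (forall i : T, i \notin F -> z i = 0) /\
  exists (lam : {set T} -> R) (mu nu : T -> R),
    [/\ (forall X : {set T}, 0 <= lam X) /\ \sum_(X in Bs) lam X = 1,
        (forall i : T, 0 <= mu i) /\ \sum_(i in F) mu i = 1,
        (forall i : T, 0 <= nu i) /\ \sum_(i in F) nu i = 1 &
        forall i : T, i \in F ->
          (z i)%:~R = \sum_(X in Bs) lam X * (i \in X)%:R
                      + u%:R * mu i - t%:R * nu i].

Definition card_is (A : eqType) (P : A -> Prop) (n : nat) : Prop :=
  exists s : seq A, [/\ uniq s, forall z, z \in s <-> P z & size s = n].

Definition Q_expansion (R : realFieldType) (T : finType) (F : {set T})
    (r : {set T} -> nat) (d : nat) (c : nat -> nat -> rat) : Prop :=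
  forall t u : nat, exists n : nat,
    card_is (in_QP R F (bases F r) t u) n /\
    n%:R = \sum_(i < d) \sum_(j < d) c i j * ('C(u, j))%:R * ('C(t, i))%:R.

(* Q'_N(x,y) = sum c_ij (x-1)^i (y-1)^j as an element of {poly {poly rat}}:
   the outer variable 'X is x, the inner variable 'X%:P is y. *)
Definition Qprime (d : nat) (c : nat -> nat -> rat) : {poly {poly rat}} :=
  \sum_(i < d) \sum_(j < d)
     (c i j)%:P%:P * ('X - 1) ^+ i * (('X - 1) ^+ j)%:P.

Definition varx : {poly {poly rat}} := 'X.
Definition vary : {poly {poly rat}} := ('X)%:P.

From HB Require Import structures.
From mathcomp Require Import all_boot all_order all_algebra.
From mathcomp Require Import ring lra zify.
Set Implicit Arguments. Unset Strict Implicit. Unset Printing Implicit Defensive.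
Import Order.TTheory GRing.Theory Num.Theory.
Local Open Scope ring_scope.

(* An integer point z of P(M) + u Δ + t ∇ is the same as an integer vector supported
   on E with sum r(E) + u - t whose positive part S = {z_i > 0} satisfies
   sum_S z <= r(S) + u.  Sorting these points by the sign of z_e gives
     Q_M(t,u) = sum_(s <= t - δ) Q_(M\e)(s,u) + sum_(v < u + λ) Q_(M/e)(t,v),
   where δ = r(E) - r(E\e) is 1 iff e is a coloop and λ = r{e} is 1 iff e is not a
   loop; for a loop or a coloop, M\e and M/e have the same rank function.  Writing
   Q_N in the basis binom(t,i) binom(u,j) and Q'_N in the basis (x-1)^i (y-1)^j with the
   same coefficients, summation in t and multiplication by x = (x-1) + 1 act on the
   coefficients in the same way (hockey-stick identity), likewise for u and y; since
   the binomial basis determines the coefficients, the recursions for Q' follow. *)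

(** * Coefficient arrays evaluated on a pair of bases *)

Definition coef_bounded (d : nat) (c : nat -> nat -> rat) : Prop :=
  forall i j, (d <= i)%N || (d <= j)%N -> c i j = 0.

Definition coef_tr (c : nat -> nat -> rat) : nat -> nat -> rat := fun i j => c j i.

Definition coef_shift (c : nat -> nat -> rat) : nat -> nat -> rat :=
  fun i j => (if i is i'.+1 then c i' j else 0) + c i j.

Lemma coef_bounded_widen d D c : coef_bounded d c -> (d <= D)%N -> coef_bounded D c.
Proof. by move=> cd dD i j /orP[] ?; apply: cd; apply/orP; [left|right]; lia. Qed.

Lemma coef_bounded_shift d c : coef_bounded d c -> coef_bounded d.+1 (coef_shift c).
Proof.
move=> cd [|i] j ij; rewrite /coef_shift; first by rewrite add0r cd //; lia.
by rewrite !cd ?addr0 //; lia.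
Qed.

Lemma coef_bounded_tr d c : coef_bounded d c -> coef_bounded d (coef_tr c).
Proof. by move=> cd i j ?; apply: cd; rewrite orbC. Qed.

Lemma sum_ord_widen (V : zmodType) (g : nat -> V) d D : (d <= D)%N ->
  (forall i, (d <= i)%N -> g i = 0) -> \sum_(i < D) g i = \sum_(i < d) g i.
Proof.
move=> dD g0; rewrite -!(big_mkord xpredT) (big_cat_nat (leq0n d) dD) /=.
by rewrite [X in _ + X]big1_seq ?addr0 // => i /andP[_]; rewrite mem_index_iota => /andP[/g0].
Qed.

Lemma sum_shift (V : comPzRingType) (g phi : nat -> V) d : g d = 0 ->
  \sum_(i < d.+1) ((if (i : nat) is i'.+1 then g i' else 0) + g i) * phi i =
  \sum_(i < d) g i * (phi i.+1 + phi i).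
Proof.
move=> gd; under eq_bigr do rewrite mulrDl.
rewrite big_split /= big_ord_recl /= mul0r add0r big_ord_recr /= gd mul0r addr0.
by rewrite -big_split /=; apply: eq_bigr => i _; rewrite mulrDr.
Qed.

Section CoefEval.
Variables (V : comPzRingType) (emb : {rmorphism rat -> V}).
Implicit Types (c : nat -> nat -> rat) (phi psi : nat -> V).

Definition coef_eval d c phi psi : V :=
  \sum_(i < d) \sum_(j < d) emb (c i j) * phi i * psi j.

Lemma coef_evalE d c phi psi :
  coef_eval d c phi psi = \sum_(i < d) (\sum_(j < d) emb (c i j) * psi j) * phi i.
Proof. by apply: eq_bigr => i _; rewrite mulr_suml; apply: eq_bigr => j _; rewrite mulrAC. Qed.

Lemma eq_coef_eval d c c' phi psi :
  (forall i j, (i < d)%N -> (j < d)%N -> c i j = c' i j) ->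
  coef_eval d c phi psi = coef_eval d c' phi psi.
Proof. by move=> cc'; apply: eq_bigr => i _; apply: eq_bigr => j _; rewrite cc'. Qed.

Lemma eq_coef_evall d c phi phi' psi :
  (forall i, phi i = phi' i) -> coef_eval d c phi psi = coef_eval d c phi' psi.
Proof. by move=> E; apply: eq_bigr => i _; apply: eq_bigr => j _; rewrite E. Qed.

Lemma eq_coef_evalr d c phi psi psi' :
  (forall j, psi j = psi' j) -> coef_eval d c phi psi = coef_eval d c phi psi'.
Proof. by move=> E; apply: eq_bigr => i _; apply: eq_bigr => j _; rewrite E. Qed.

Lemma coef_eval_widen d D c : coef_bounded d c -> (d <= D)%N ->
  forall phi psi, coef_eval D c phi psi = coef_eval d c phi psi.
Proof.
move=> cd dD phi psi.
have c0 i j : (d <= i)%N || (d <= j)%N -> emb (c i j) * phi i * psi j = 0.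
  by move=> ij; rewrite cd // rmorph0 !mul0r.
rewrite /coef_eval (sum_ord_widen (g := fun i => \sum_(j < D) emb (c i j) * phi i * psi j) dD).
  apply: eq_bigr => i _; apply: (sum_ord_widen (g := fun j => emb (c i j) * phi i * psi j)) => //.
  by move=> j dj; rewrite c0 ?dj ?orbT.
by move=> i di; rewrite big1 // => j _; rewrite c0 ?di.
Qed.

Lemma coef_evalD d c c' phi psi :
  coef_eval d (fun i j => c i j + c' i j) phi psi =
  coef_eval d c phi psi + coef_eval d c' phi psi.
Proof.
rewrite -big_split; apply: eq_bigr => i _; rewrite -big_split.
by apply: eq_bigr => j _; rewrite rmorphD !mulrDl.
Qed.

Lemma coef_evalN d c phi psi :
  coef_eval d (fun i j => - c i j) phi psi = - coef_eval d c phi psi.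
Proof.
rewrite -sumrN; apply: eq_bigr => i _; rewrite -sumrN.
by apply: eq_bigr => j _; rewrite rmorphN !mulNr.
Qed.

Lemma coef_eval_suml d c (phis : nat -> nat -> V) psi n :
  coef_eval d c (fun i => \sum_(s < n) phis s i) psi =
  \sum_(s < n) coef_eval d c (phis s) psi.
Proof.
rewrite exchange_big; apply: eq_bigr => i _; rewrite exchange_big.
by apply: eq_bigr => j _; rewrite mulr_sumr mulr_suml.
Qed.

Lemma coef_eval_mull d c a phi psi :
  coef_eval d c (fun i => a * phi i) psi = a * coef_eval d c phi psi.
Proof.
rewrite mulr_sumr; apply: eq_bigr => i _; rewrite mulr_sumr.
by apply: eq_bigr => j _; rewrite !mulrA [emb _ * a]mulrC.
Qed.

Lemma coef_eval_tr d c phi psi : coef_eval d (coef_tr c) psi phi = coef_eval d c phi psi.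
Proof.
rewrite /coef_eval exchange_big; apply: eq_bigr => i _; apply: eq_bigr => j _.
by rewrite /coef_tr mulrAC.
Qed.

Lemma coef_eval_sumr d c phi (psis : nat -> nat -> V) n :
  coef_eval d c phi (fun j => \sum_(s < n) psis s j) =
  \sum_(s < n) coef_eval d c phi (psis s).
Proof. by rewrite -coef_eval_tr coef_eval_suml; apply: eq_bigr => s _; rewrite coef_eval_tr. Qed.

Lemma coef_eval_mulr d c a phi psi :
  coef_eval d c phi (fun j => a * psi j) = a * coef_eval d c phi psi.
Proof. by rewrite -coef_eval_tr coef_eval_mull coef_eval_tr. Qed.

Lemma coef_eval_shift d c phi psi : coef_bounded d c ->
  coef_eval d.+1 (coef_shift c) phi psi = coef_eval d c (fun i => phi i.+1 + phi i) psi.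
Proof.
move=> cd; rewrite !coef_evalE.
pose G i := \sum_(j < d.+1) emb (c i j) * psi j.
have -> : \sum_(i < d.+1) (\sum_(j < d.+1) emb (coef_shift c i j) * psi j) * phi i =
          \sum_(i < d.+1) ((if (i : nat) is i'.+1 then G i' else 0) + G i) * phi i.
  apply: eq_bigr => -[[|i] ?] _; rewrite /G /coef_shift /=.
    by rewrite add0r; under eq_bigr do rewrite add0r.
  by rewrite -big_split /=; under eq_bigr do rewrite rmorphD mulrDl.
rewrite sum_shift; last by rewrite /G big1 // => j _; rewrite cd ?leqnn // rmorph0 mul0r.
apply: eq_bigr => i _; congr (_ * _).
apply: (sum_ord_widen (g := fun j => emb (c i j) * psi j)) => // j dj.
by rewrite cd ?dj ?orbT // rmorph0 mul0r.
Qed.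

Lemma coef_eval_shiftr d c phi psi : coef_bounded d c ->
  coef_eval d.+1 (coef_tr (coef_shift (coef_tr c))) phi psi =
  coef_eval d c phi (fun j => psi j.+1 + psi j).
Proof.
move=> cd; rewrite -[RHS]coef_eval_tr -coef_eval_shift; last exact: coef_bounded_tr.
by rewrite coef_eval_tr.
Qed.

End CoefEval.

(** * Binomial expansions and the polynomial Q' *)

Definition binom_eval (d : nat) (c : nat -> nat -> rat) (t u : nat) : rat :=
  \sum_(i < d) \sum_(j < d) c i j * ('C(u, j))%:R * ('C(t, i))%:R.

Lemma binom_evalE d c t u :
  binom_eval d c t u = coef_eval idfun d c (fun i => ('C(t, i))%:R) (fun j => ('C(u, j))%:R).
Proof. by apply: eq_bigr => i _; apply: eq_bigr => j _; rewrite mulrAC. Qed.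

Lemma QprimeE d c :
  Qprime d c =
  coef_eval (polyC \o polyC) d c (fun i => ('X - 1) ^+ i) (fun j => (('X - 1) ^+ j)%:P).
Proof. by []. Qed.

Lemma hockey_stick t i : (\sum_(s < t.+1) 'C(s, i) = 'C(t.+1, i.+1))%N.
Proof.
elim: t => [|t IH]; first by rewrite big_ord_recr big_ord0 /= binS bin0n add0n.
by rewrite big_ord_recr /= IH [in RHS]binS.
Qed.

Lemma binomial_sum_eq0 d (g : nat -> rat) :
  (forall t, \sum_(i < d) g i * ('C(t, i))%:R = 0) -> forall i, (i < d)%N -> g i = 0.
Proof.
move=> g0 i; elim/ltn_ind: i => i IH id.
have := g0 i; rewrite (bigD1 (Ordinal id)) //= binn mulr1 big1 ?addr0 // => j ji.
have [jlt|jgt|jeq] := ltngtP j i.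
- by rewrite IH ?mul0r.
- by rewrite bin_small ?mulr0.
- by case/eqP: ji; apply: val_inj.
Qed.

Lemma binom_eval_inj d c c' : (forall t u, binom_eval d c t u = binom_eval d c' t u) ->
  forall i j, (i < d)%N -> (j < d)%N -> c i j = c' i j.
Proof.
move=> cc' i j id jd; apply/eqP; rewrite -subr_eq0; apply/eqP.
pose h i j := c i j - c' i j.
have h0 t u : coef_eval idfun d h (fun i => ('C(t, i))%:R) (fun j => ('C(u, j))%:R) = 0.
  by rewrite coef_evalD coef_evalN -!binom_evalE cc' subrr.
have hu u : \sum_(j < d) h i j * ('C(u, j))%:R = 0.
  move: i id; apply: (binomial_sum_eq0 (g := fun i => \sum_(j < d) h i j * ('C(u, j))%:R)).
  by move=> t; rewrite -[RHS](h0 t u) coef_evalE.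
exact: (binomial_sum_eq0 (g := h i)).
Qed.

Definition is_Qprime (P : {poly {poly rat}}) (f : nat -> nat -> rat) : Prop :=
  exists d c, [/\ coef_bounded d c, P = Qprime d c & forall t u, f t u = binom_eval d c t u].

Lemma is_Qprime_Qprime d c : is_Qprime (Qprime d c) (binom_eval d c).
Proof.
pose c' i j := if (i < d)%N && (j < d)%N then c i j else 0.
have cc' i j : (i < d)%N -> (j < d)%N -> c i j = c' i j by rewrite /c' => -> ->.
exists d, c'; split=> [i j||t u].
- by rewrite /c' => /orP[] dij; rewrite ifF //; apply/negbTE; rewrite negb_and -!leqNgt dij ?orbT.
- by rewrite !QprimeE; apply: eq_coef_eval.
- by rewrite !binom_evalE; apply: eq_coef_eval.
Qed.

Lemma is_Qprime_ext P f g :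
  (forall t u, f t u = g t u) -> is_Qprime P f -> is_Qprime P g.
Proof. by move=> fg [d [c [cd -> Ef]]]; exists d, c; split=> // t u; rewrite -fg. Qed.

Lemma is_QprimeD P f P' g : is_Qprime P f -> is_Qprime P' g ->
  is_Qprime (P + P') (fun t u => f t u + g t u).
Proof.
move=> [d [c [cd -> Ef]]] [d' [c' [cd' -> Eg]]].
have [dD d'D] : (d <= maxn d d')%N /\ (d' <= maxn d d')%N by rewrite leq_maxl leq_maxr.
have [cD c'D] := (coef_bounded_widen cd dD, coef_bounded_widen cd' d'D).
exists (maxn d d'), (fun i j => c i j + c' i j); split.
- by move=> i j ij; rewrite cD // c'D // addr0.
- by rewrite !QprimeE coef_evalD (coef_eval_widen _ cd dD) (coef_eval_widen _ cd' d'D).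
- move=> t u; rewrite Ef Eg !binom_evalE coef_evalD.
  by rewrite (coef_eval_widen _ cd dD) (coef_eval_widen _ cd' d'D).
Qed.

Lemma is_QprimeN P f : is_Qprime P f -> is_Qprime (- P) (fun t u => - f t u).
Proof.
move=> [d [c [cd -> Ef]]]; exists d, (fun i j => - c i j); split.
- by move=> i j ij; rewrite cd ?oppr0.
- by rewrite !QprimeE coef_evalN.
- by move=> t u; rewrite Ef !binom_evalE coef_evalN.
Qed.

Lemma is_Qprime_sum_t P f : is_Qprime P f ->
  is_Qprime (varx * P) (fun t u => \sum_(s < t.+1) f s u).
Proof.
move=> [d [c [cd -> Ef]]]; exists d.+1, (coef_shift c); split.
- exact: coef_bounded_shift.
- rewrite !QprimeE coef_eval_shift // -coef_eval_mull; apply: eq_coef_evall => i.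
  by rewrite exprS mulrBl mul1r subrK.
- move=> t u; under eq_bigr do rewrite Ef binom_evalE.
  rewrite binom_evalE coef_eval_shift // -(coef_eval_suml _ _ _ (fun s i => ('C(s, i))%:R)).
  apply: eq_coef_evall => i.
  by rewrite -natr_sum hockey_stick binS natrD.
Qed.

Lemma is_Qprime_sum_u P f : is_Qprime P f ->
  is_Qprime (vary * P) (fun t u => \sum_(v < u.+1) f t v).
Proof.
move=> [d [c [cd -> Ef]]]; exists d.+1, (coef_tr (coef_shift (coef_tr c))); split.
- exact/coef_bounded_tr/coef_bounded_shift/coef_bounded_tr.
- rewrite !QprimeE coef_eval_shiftr // -coef_eval_mulr; apply: eq_coef_evalr => j.
  by rewrite /vary -!rmorphM -rmorphD exprS mulrBl mul1r subrK.
- move=> t u; under eq_bigr do rewrite Ef binom_evalE.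
  rewrite binom_evalE coef_eval_shiftr // -(coef_eval_sumr _ _ _ _ (fun v j => ('C(v, j))%:R)).
  apply: eq_coef_evalr => j.
  by rewrite -natr_sum hockey_stick binS natrD.
Qed.

Lemma is_Qprime_unique P P' f : is_Qprime P f -> is_Qprime P' f -> P = P'.
Proof.
move=> [d [c [cd -> Ef]]] [d' [c' [cd' -> Ef']]].
have [dD d'D] : (d <= maxn d d')%N /\ (d' <= maxn d d')%N by rewrite leq_maxl leq_maxr.
rewrite !QprimeE -(coef_eval_widen _ cd dD) -(coef_eval_widen _ cd' d'D).
apply: eq_coef_eval; apply: binom_eval_inj => t u.
rewrite !binom_evalE (coef_eval_widen _ cd dD) (coef_eval_widen _ cd' d'D).
by rewrite -!binom_evalE -Ef Ef'.
Qed.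

Lemma is_Qprime_xy1 P f : is_Qprime P f ->
  is_Qprime ((varx + vary - 1) * P)
            (fun t u => \sum_(s < t.+1) f s u + \sum_(v < u.+1) f t v - f t u).
Proof.
move=> fP; rewrite mulrBl mul1r mulrDl.
exact: (is_QprimeD (is_QprimeD (is_Qprime_sum_t fP) (is_Qprime_sum_u fP)) (is_QprimeN fP)).
Qed.

(** * Counting solution sets *)

Section Counting.
Variable A : eqType.
Implicit Types (P Q : A -> Prop) (q : rat).

Definition counts P q : Prop := exists n : nat, card_is P n /\ n%:R = q.

Lemma counts_ext P Q q : (forall z, P z <-> Q z) -> counts P q -> counts Q q.
Proof.
by move=> PQ [n [[s [us Ps sn]] <-]]; exists n; split=> //; exists s; split=> // z; rewrite Ps.
Qed.

Lemma counts_unique P q q' : counts P q -> counts P q' -> q = q'.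
Proof.
move=> [_ [[s [us Ps <-]] <-]] [_ [[s' [us' Ps' <-]] <-]]; congr (_%:R).
by apply/perm_size/uniq_perm => // z; apply/idP/idP => zs; [apply/Ps'/Ps|apply/Ps/Ps'].
Qed.

Lemma counts0 : counts (fun _ => False) 0.
Proof. by exists 0%N; split=> //; exists [::]. Qed.

Lemma counts_or P Q q q' : (forall z, P z -> Q z -> False) ->
  counts P q -> counts Q q' -> counts (fun z => P z \/ Q z) (q + q').
Proof.
move=> PQ [_ [[s [us Ps <-]] <-]] [_ [[s' [us' Ps' <-]] <-]].
exists (size s + size s')%N; rewrite natrD; split=> //.
exists (s ++ s'); rewrite size_cat; split=> //.
- rewrite cat_uniq us us' andbT; apply/hasPn => z /Ps' Qz.
  by apply/negP => /Ps Pz; apply: PQ Pz Qz.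
- by move=> z; rewrite mem_cat; split=> [/orP[/Ps|/Ps']|[/Ps|/Ps'] ->]; rewrite ?orbT; auto.
Qed.

Lemma counts_bigor (P : nat -> A -> Prop) (q : nat -> rat) m :
  (forall k, (k < m)%N -> counts (P k) (q k)) ->
  (forall k k' z, P k z -> P k' z -> k = k') ->
  counts (fun z => exists2 k, (k < m)%N & P k z) (\sum_(k < m) q k).
Proof.
move=> Pq Pdisj; elim: m Pq => [|m IH] Pq.
  by rewrite big_ord0; apply: counts_ext counts0 => z; split=> // -[].
rewrite big_ord_recr /=.
apply: (counts_ext (P := fun z => (exists2 k, (k < m)%N & P k z) \/ P m z)).
  move=> z; split=> [[[k km Pkz]|Pmz]|[k]]; first by exists k => //; apply: ltnW.
  - by exists m.
  - by rewrite ltnS leq_eqVlt => /orP[/eqP ->|km]; [right|left; exists k].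
apply: counts_or; last exact: Pq.
- by move=> z [k km Pkz] /(Pdisj _ _ _ Pkz) km'; rewrite km' ltnn in km.
- by apply: IH => k km; apply: Pq; apply: ltnW.
Qed.

Lemma counts_image P (f g : A -> A) q : (forall w, P w -> g (f w) = w) ->
  counts P q -> counts (fun z => exists2 w, P w & z = f w) q.
Proof.
move=> fK [_ [[s [us Ps <-]] <-]]; exists (size s); split=> //.
exists (map f s); rewrite size_map; split=> //.
- rewrite map_inj_in_uniq // => x y /Ps Px /Ps Py E.
  by rewrite -(fK _ Px) E fK.
- move=> z; split=> [/mapP[w /Ps Pw ->]|[w /Ps Pw ->]]; first by exists w.
  exact: map_f.
Qed.

End Counting.

(** * Matroid rank functions *)

Section MatroidRank.
Variables (T : finType) (F : {set T}) (r : {set T} -> nat).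
Hypothesis M : is_matroid F r.
Implicit Types X Y I S : {set T}.

Lemma rank_le_card X : X \subset F -> (r X <= #|X|)%N.
Proof. by case: M => H _ _; apply: H. Qed.

Lemma rank_mono X Y : Y \subset F -> X \subset Y -> (r X <= r Y)%N.
Proof. by case: M => _ H _; apply: H. Qed.

Lemma rank_submod X Y : X \subset F -> Y \subset F ->
  (r (X :|: Y) + r (X :&: Y) <= r X + r Y)%N.
Proof. by case: M => _ _ H; apply: H. Qed.

Lemma rank0 : r set0 = 0%N.
Proof. by apply/eqP; rewrite -leqn0 -(cards0 T) rank_le_card ?sub0set. Qed.

Lemma indep_subset X Y : Y \subset F -> X \subset Y -> r Y = #|Y| -> r X = #|X|.
Proof.
move=> YF XY rY; have XF := subset_trans XY YF.
have DF : Y :\: X \subset F by apply: subset_trans (subsetDl _ _) YF.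
have U : X :|: (Y :\: X) = Y by rewrite setDE setUIr setUCr setIT; apply/setUidPr.
have I : X :&: (Y :\: X) = set0 by rewrite setDE setICA setICr setI0.
have := rank_submod XF DF; rewrite U I rank0 addn0 rY.
have := rank_le_card DF; rewrite cardsDS //; have := rank_le_card XF.
have := subset_leq_card XY; lia.
Qed.

(* Submodularity propagates "x adds nothing to I" from single elements to all of Y. *)
Lemma rank_span I Y : Y \subset F -> I \subset Y ->
  (forall x, x \in Y -> r (x |: I) = r I) -> r Y = r I.
Proof.
move=> YF IY rIx; have IF := subset_trans IY YF.
suff rIA (A : {set T}) : A \subset Y -> r (I :|: A) = r I by rewrite -(rIA Y) ?(setUidPr IY).
move: {2}#|A| (erefl #|A|) => n; elim: n A => [|n IH] A cA AY.
  by move/eqP: cA; rewrite cards_eq0 => /eqP ->; rewrite setU0.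
have [A0|[x xA]] := set_0Vmem A; first by rewrite A0 cards0 in cA.
have A'Y : A :\ x \subset Y by apply: subset_trans (subsetDl _ _) AY.
have rIA' : r (I :|: A :\ x) = r I.
  by apply: IH A'Y; move: cA; rewrite (cardsD1 x A) xA add1n => -[].
have xY : x \in Y := subsetP AY x xA.
have IAF : I :|: A \subset F by rewrite subUset IF (subset_trans AY YF).
have xIF : x |: I \subset F by rewrite subUset IF sub1set (subsetP YF).
have := rank_submod (subset_trans (setUS I (subsetDl A [set x])) IAF) xIF.
have -> : (I :|: A :\ x) :|: (x |: I) = I :|: A.
  apply/setP => y; rewrite !inE; case: (eqVneq y x) => [->|_]; first by rewrite xA !orbT.
  by case: (y \in I); case: (y \in A).
have : (r I <= r ((I :|: A :\ x) :&: (x |: I)))%N.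
  apply: rank_mono; first exact: (subset_trans (subsetIr _ _) xIF).
  by rewrite subsetI subsetUl subsetUr.
have : (r I <= r (I :|: A))%N by apply: (rank_mono IAF (subsetUl _ _)).
by rewrite rIA' rIx //; lia.
Qed.

Lemma indep_extend I0 S : S \subset F -> I0 \subset S -> r I0 = #|I0| ->
  exists I, [/\ I0 \subset I, I \subset S, r I = #|I| & r S = r I].
Proof.
move=> SF I0S rI0.
pose P I := [&& I0 \subset I, I \subset S & r I == #|I|].
have P0 : P I0 by rewrite /P subxx I0S rI0 eqxx.
have [I /and3P[I0I IS /eqP rI] Imax] := @arg_maxnP _ _ P (fun I => #|I|) P0.
exists I; split=> //; have IF := subset_trans IS SF.
apply: rank_span => // x xS; have [xI|xI] := boolP (x \in I).
  by rewrite (setUidPr _) // sub1set.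
have xIF : x |: I \subset F by rewrite subUset IF sub1set (subsetP SF).
have := rank_le_card xIF; have := rank_mono xIF (subsetUr _ _).
have [rxI|] := eqVneq (r (x |: I)) #|x |: I|; last by rewrite cardsU1 xI rI; lia.
have : P (x |: I).
  by rewrite /P rxI eqxx subUset sub1set xS IS (subset_trans I0I (subsetUr _ _)).
by move/Imax; rewrite cardsU1 xI; lia.
Qed.

Lemma mem_bases B : B \in bases F r -> B \subset F /\ #|B| = r F.
Proof. by rewrite inE => /and3P[BF /eqP -> /eqP ->]. Qed.

Lemma card_bases_setI B S : B \in bases F r -> S \subset F -> (#|B :&: S| <= r S)%N.
Proof.
rewrite inE => /and3P[BF /eqP cB _] SF.
rewrite -(indep_subset BF (subsetIl B S) (esym cB)).
exact: (rank_mono SF (subsetIr _ _)).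
Qed.

Lemma exists_bases_setI S : S \subset F -> exists2 B, B \in bases F r & #|B :&: S| = r S.
Proof.
move=> SF; have r0 : r set0 = #|set0 : {set T}| by rewrite rank0 cards0.
have [I [_ IS rI rS]] := indep_extend SF (sub0set S) r0.
have [J [IJ JF rJ rF]] := indep_extend (subxx F) (subset_trans IS SF) rI.
exists J; first by rewrite inE JF rJ eqxx /= rF rJ.
apply/eqP; rewrite eqn_leq card_bases_setI ?inE ?JF ?rJ ?eqxx ?rF ?rJ //=.
by rewrite rS rI subset_leq_card // subsetI IJ IS.
Qed.

End MatroidRank.

Section DeletionContraction.
Variables (T : finType) (F : {set T}) (r : {set T} -> nat) (e : T).
Hypotheses (M : is_matroid F r) (eF : e \in F).
Implicit Types X Y : {set T}.

Lemma is_matroid_del : is_matroid (F :\ e) r.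
Proof.
have FeF := subsetDl F [set e].
split=> [X XF|X Y YF XY|X Y XF YF].
- exact: (rank_le_card M (subset_trans XF FeF)).
- exact: (rank_mono M (subset_trans YF FeF) XY).
- exact: (rank_submod M (subset_trans XF FeF) (subset_trans YF FeF)).
Qed.

Lemma setU1_subset X : X \subset F :\ e -> e |: X \subset F.
Proof. by move=> XF; rewrite subUset sub1set eF (subset_trans XF (subsetDl _ _)). Qed.

Lemma rank1_le_setU1 X : X \subset F :\ e -> (r [set e] <= r (e |: X))%N.
Proof. by move=> XF; apply: (rank_mono M (setU1_subset XF) (subsetUl _ _)). Qed.

Lemma rank_le_setU1 X : X \subset F :\ e -> (r X <= r (e |: X))%N.
Proof. by move=> XF; apply: (rank_mono M (setU1_subset XF) (subsetUr _ _)). Qed.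

Lemma rank_setU1_le X : X \subset F :\ e -> (r (e |: X) <= r X + r [set e])%N.
Proof.
move=> XF; have XF' := subset_trans XF (subsetDl _ _).
have eX : [set e] :&: X = set0.
  apply/setP => i; rewrite !inE; have [->|//] := eqVneq i e.
  by apply/negP => /(subsetP XF); rewrite !inE eqxx.
have eF1 : [set e] \subset F by rewrite sub1set.
by have := rank_submod M eF1 XF'; rewrite eX (rank0 M) addn0 addnC.
Qed.

Lemma rank1_le1 : (r [set e] <= 1)%N.
Proof. by rewrite -(cards1 e) (rank_le_card M) // sub1set. Qed.

Lemma rank_setD1_le : (r (F :\ e) <= r F)%N.
Proof. exact: (rank_mono M (subxx F) (subsetDl _ _)). Qed.

Lemma rank_le_setD1 : (r F <= r (F :\ e) + r [set e])%N.
Proof. by have := rank_setU1_le (subxx (F :\ e)); rewrite setD1K. Qed.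

Lemma is_matroid_contr : is_matroid (F :\ e) (contr_rank r e).
Proof.
rewrite /contr_rank; split=> [X XF|X Y YF XY|X Y XF YF].
- by have := rank_setU1_le XF; have := rank_le_card is_matroid_del XF; lia.
- have XF := subset_trans XY YF; have := rank1_le_setU1 XF; have := rank1_le_setU1 YF.
  have : (r (e |: X) <= r (e |: Y))%N by apply: (rank_mono M (setU1_subset YF) (setUS _ XY)).
  lia.
- have XYF : X :|: Y \subset F :\ e by rewrite subUset XF YF.
  have XIF : X :&: Y \subset F :\ e by apply: subset_trans (subsetIl _ _) XF.
  have := rank1_le_setU1 XF; have := rank1_le_setU1 YF.
  have := rank1_le_setU1 XYF; have := rank1_le_setU1 XIF.
  have := rank_submod M (setU1_subset XF) (setU1_subset YF).
  rewrite -setUUr -setUIr; lia.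
Qed.

Lemma loop_rank : is_loop r e -> r F = r (F :\ e).
Proof. by rewrite /is_loop => le; have := rank_le_setD1; have := rank_setD1_le; lia. Qed.

Lemma coloop_rank : is_coloop F r e -> r [set e] = 1%N /\ r F = (r (F :\ e)).+1.
Proof. by rewrite /is_coloop => ce; have := rank_le_setD1; have := rank1_le1; lia. Qed.

Lemma ordinary_rank : ~ is_loop r e -> ~ is_coloop F r e ->
  r [set e] = 1%N /\ r F = r (F :\ e).
Proof.
rewrite /is_loop /is_coloop => nl nc.
by have := rank_setD1_le; have := rank1_le1; lia.
Qed.

(* For a coloop e, submodularity on e |: X and F :\ e shows that e raises every rank. *)
Lemma contr_rank_loop_coloop X : is_loop r e \/ is_coloop F r e ->
  X \subset F :\ e -> contr_rank r e X = r X.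
Proof.
move=> le_ce XF; have := rank_le_setU1 XF; have := rank_setU1_le XF.
rewrite /contr_rank; case: le_ce => [le|ce]; first by rewrite le; lia.
have [e1 rF] := coloop_rank ce.
have := rank_submod M (setU1_subset XF) (subsetDl F [set e]).
have -> : (e |: X) :|: (F :\ e) = F.
  by rewrite setUAC setD1K //; apply/setUidPl; apply: subset_trans XF (subsetDl _ _).
have -> : (e |: X) :&: (F :\ e) = X.
  by rewrite setIUl (setIidPl XF) setIDA (setIidPl _) ?sub1set // setDv set0U.
by rewrite e1 rF; lia.
Qed.

End DeletionContraction.

(** * Lattice points of P(M) + u Δ + t ∇ *)

Definition pos_supp (T : finType) (F : {set T}) (z : {ffun T -> int}) : {set T} :=
  [set i in F | 0 < z i].

Definition QP_ineq (T : finType) (F : {set T}) (r : {set T} -> nat) (t u : nat)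
    (z : {ffun T -> int}) : Prop :=
  [/\ forall i, i \notin F -> z i = 0,
      \sum_(i in F) z i = (r F)%:Z + u%:Z - t%:Z &
      \sum_(i in pos_supp F z) z i <= (r (pos_supp F z))%:Z + u%:Z].

Lemma pos_supp_sub (T : finType) (F : {set T}) z : pos_supp F z \subset F.
Proof. by apply/subsetP => i; rewrite inE => /andP[]. Qed.

Lemma sum_mem_card (R : pzSemiRingType) (T : finType) (X S : {set T}) :
  \sum_(i in S) ((i \in X)%:R : R) = (#|X :&: S|)%:R.
Proof.
rewrite -natr_sum -sum1_card (big_setID X) /= [X in (_ + X)%N]big1 ?addn0.
  by rewrite setIC; congr (_%:R); apply: eq_bigr => i; rewrite inE => /andP[->].
by move=> i; rewrite !inE => /andP[/negbTE ->].
Qed.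

Section Characterization.
Variables (R : realFieldType) (T : finType) (F : {set T}) (r : {set T} -> nat).
Hypothesis M : is_matroid F r.

(* Averaging [|B :&: S| <= r S] over the bases gives the inequality for S = pos_supp F z. *)
Lemma QP_ineq_of_in_QP t u z : in_QP R F (bases F r) t u z -> QP_ineq F r t u z.
Proof.
move=> [off [lam [mu [nu [[lam0 lam1] [mu0 mu1] [nu0 nu1] Ez]]]]].
have sumS (S : {set T}) : S \subset F -> \sum_(i in S) ((z i)%:~R : R) =
    \sum_(X in bases F r) lam X * (#|X :&: S|)%:R + u%:R * \sum_(i in S) mu i
    - t%:R * \sum_(i in S) nu i.
  move=> SF; rewrite (eq_bigr _ (fun i iS => Ez i (subsetP SF i iS))).
  rewrite sumrB big_split /= -!mulr_sumr exchange_big /=; congr (_ + _ - _).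
  by apply: eq_bigr => X _; rewrite -mulr_sumr sum_mem_card.
have lam_avg (x : R) : \sum_(X in bases F r) lam X * x = x by rewrite -mulr_suml lam1 mul1r.
split=> //.
  apply/eqP; rewrite -(eqr_int R) rmorph_sum /= sumS // mu1 nu1 !mulr1.
  have -> : \sum_(X in bases F r) lam X * (#|X :&: F|)%:R = (r F)%:R.
    rewrite -[RHS]lam_avg; apply: eq_bigr => X XB.
    by have [XF cX] := mem_bases XB; rewrite (setIidPl XF) cX.
  by rewrite !rmorphB rmorphD.
set S := pos_supp F z; have SF : S \subset F := pos_supp_sub F z.
rewrite -(ler_int R) rmorph_sum /= sumS // rmorphD /=.
have : \sum_(X in bases F r) lam X * (#|X :&: S|)%:R <= (r S)%:R :> R.
  rewrite -[X in _ <= X]lam_avg; apply: ler_sum => X XB; apply: ler_wpM2l => //.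
  by rewrite ler_nat (card_bases_setI M).
have : \sum_(i in S) mu i <= 1.
  by rewrite -mu1 [X in _ <= X](big_setID S) /= (setIidPr SF) lerDl sumr_ge0.
have : 0 <= \sum_(i in S) nu i by apply: sumr_ge0.
have : 0 <= u%:R :> R by []. have : 0 <= t%:R :> R by [].
rewrite -!pmulrn; nra.
Qed.

Lemma simplex_scale (F0 : F != set0) (a : T -> int) (u : nat) :
  (forall i, 0 <= a i) -> \sum_(i in F) a i = u%:Z ->
  exists2 mu : T -> R, (forall i, 0 <= mu i) /\ \sum_(i in F) mu i = 1
                     & forall i, i \in F -> u%:R * mu i = (a i)%:~R.
Proof.
move=> a0 sa; have [u0|u0] := eqVneq u 0%N.
  have /set0Pn[i0 i0F] := F0.
  exists (fun i => (i == i0)%:R); first split=> [i|]; first by case: (i == i0).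
    by under eq_bigr do rewrite -in_set1; rewrite sum_mem_card (setIidPl _) ?cards1 ?sub1set.
  move=> i iF; have := psumr_eq0P (P := fun i => i \in F) (fun i _ => a0 i).
  by rewrite sa u0 => /(_ erefl i iF) ->; rewrite mul0r.
have u0' : u%:R != 0 :> R by rewrite pnatr_eq0.
exists (fun i => (a i)%:~R / u%:R); first split=> [i|].
- by rewrite divr_ge0 ?ler0z.
- by rewrite -mulr_suml -rmorph_sum /= sa divff.
- by move=> i _; rewrite mulrC divfK.
Qed.

(* On the positive support put a basis B meeting it in r S elements; z - 1_B then splits
   into a nonnegative part a living on S and a nonnegative part b off S, and the slack
   u - sum a is added to both at a fixed point i0. *)
Lemma QP_ineq_decomp t u z i0 : i0 \in F -> QP_ineq F r t u z ->
  exists B (a b : T -> int),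
    [/\ B \in bases F r, (forall i, 0 <= a i) /\ (forall i, 0 <= b i),
        \sum_(i in F) a i = u%:Z, \sum_(i in F) b i = t%:Z
      & forall i, z i = (i \in B)%:R + a i - b i].
Proof.
move=> i0F [off sumz]; set S := pos_supp F z => posle; have SF := pos_supp_sub F z.
have [B BB BS] := exists_bases_setI M SF; have [BF cB] := mem_bases BB.
pose d i : int := z i - (i \in B)%:R.
pose a0 i : int := if i \in S then d i else 0.
have sum_a0 : \sum_(i in F) a0 i = \sum_(i in S) z i - (r S)%:Z.
  rewrite (big_setID S) /= (setIidPr SF) [X in _ + X]big1 ?addr0; last first.
    by move=> i; rewrite inE => /andP[/negbTE iS _]; rewrite /a0 iS.
  rewrite (eq_bigr d); last by move=> i iS; rewrite /a0 iS.
  by rewrite /d sumrB sum_mem_card BS natz.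
pose c := u%:Z - \sum_(i in F) a0 i.
have c0 : 0 <= c by rewrite /c sum_a0; lia.
have a00 i : 0 <= a0 i.
  rewrite /a0 /d; case: ifP => // /[dup] iS; rewrite inE => /andP[_].
  by case: (i \in B); lia.
have a0d i : 0 <= a0 i - d i.
  rewrite /a0 /d; case: ifP => [_|]; first by rewrite subrr.
  rewrite inE; case: (boolP (i \in F)) => [_ /= /negbT|/off -> _]; case: (i \in B) => /=; lia.
have sum_i0 : \sum_(i in F) (i == i0)%:R * c = c.
  rewrite -mulr_suml; under eq_bigr do rewrite -in_set1.
  by rewrite sum_mem_card (setIidPl _) ?cards1 ?mul1r ?sub1set.
exists B, (fun i => a0 i + (i == i0)%:R * c), (fun i => a0 i - d i + (i == i0)%:R * c).
split=> //.
- by split=> i; apply: addr_ge0 => //; case: (i == i0); rewrite ?mul1r ?mul0r.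
- by rewrite big_split /= sum_i0 /c addrC subrK.
- rewrite big_split /= sum_i0 sumrB /d sumrB sum_mem_card (setIidPl BF) cB natz sumz /c; ring.
- by move=> i; rewrite /d; lia.
Qed.

Lemma in_QP_of_QP_ineq t u z :
  F != set0 -> QP_ineq F r t u z -> in_QP R F (bases F r) t u z.
Proof.
move=> F0 Hz; have /set0Pn[i0 i0F] := F0.
have [B [a [b [BB [a0 b0] sa sb Ez]]]] := QP_ineq_decomp i0F Hz.
have [mu mu1 Emu] := simplex_scale F0 a0 sa; have [nu nu1 Enu] := simplex_scale F0 b0 sb.
split; first by case: Hz.
exists (fun X => (X == B)%:R), mu, nu; split=> //.
  split=> [X|]; first by case: (X == B).
  by rewrite (bigD1 B) //= eqxx big1 ?addr0 // => X /andP[_ /negbTE ->].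
move=> i iF; rewrite Emu // Enu // (bigD1 B) //= eqxx mul1r big1 ?addr0; last first.
  by move=> X /andP[_ /negbTE ->]; rewrite mul0r.
by rewrite Ez rmorphB rmorphD /= rmorph_nat.
Qed.

Lemma in_QPE t u z : F != set0 -> in_QP R F (bases F r) t u z <-> QP_ineq F r t u z.
Proof. by move=> F0; split; [apply: QP_ineq_of_in_QP | apply: in_QP_of_QP_ineq]. Qed.

End Characterization.

Lemma QP_ineq_ext (T : finType) (G : {set T}) (r1 r2 : {set T} -> nat) t u z :
  (forall X : {set T}, X \subset G -> r1 X = r2 X) ->
  QP_ineq G r1 t u z <-> QP_ineq G r2 t u z.
Proof. by move=> E; rewrite /QP_ineq !E ?pos_supp_sub. Qed.

(** * Splitting lattice points at an element *)

Definition ffun_set (T : finType) (z : {ffun T -> int}) (e : T) (k : int) : {ffun T -> int} :=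
  [ffun i => if i == e then k else z i].

Section FfunSet.
Variables (T : finType) (e : T).
Implicit Types (z w : {ffun T -> int}) (G : {set T}).

Lemma ffun_set_eq z k : ffun_set z e k e = k.
Proof. by rewrite ffunE eqxx. Qed.

Lemma ffun_set_neq z k i : i != e -> ffun_set z e k i = z i.
Proof. by rewrite ffunE => /negbTE ->. Qed.

Lemma ffun_setK z k : z e = 0 -> ffun_set (ffun_set z e k) e 0 = z.
Proof. by move=> ze; apply/ffunP => i; rewrite !ffunE; case: eqVneq => // ->. Qed.

Lemma ffun_set_id z : ffun_set (ffun_set z e 0) e (z e) = z.
Proof. by apply/ffunP => i; rewrite !ffunE; case: eqVneq => // ->. Qed.

Lemma sum_ffun_set G z k : e \notin G -> \sum_(i in G) ffun_set z e k i = \sum_(i in G) z i.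
Proof.
by move=> eG; apply: eq_bigr => i iG; rewrite ffun_set_neq //; apply: contraNneq eG => <-.
Qed.

Lemma counts_ffun_set (P : {ffun T -> int} -> Prop) (k : int) q :
  (forall w, P w -> w e = 0) -> counts P q ->
  counts (fun z => P (ffun_set z e 0) /\ z e = k) q.
Proof.
move=> Pe Pq.
have fK w : P w -> ffun_set (ffun_set w e k) e 0 = w by move/Pe; apply: ffun_setK.
have := counts_image (f := fun w => ffun_set w e k) (g := fun z => ffun_set z e 0) fK Pq.
apply: counts_ext => z; split.
  by move=> [w Pw ->]; rewrite ffun_set_eq ffun_setK ?Pe.
by move=> [Pz <-]; exists (ffun_set z e 0) => //; rewrite ffun_set_id.
Qed.

End FfunSet.

Lemma sum_le_pos_supp (T : finType) (G : {set T}) (w : {ffun T -> int}) :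
  \sum_(i in G) w i <= \sum_(i in pos_supp G w) w i.
Proof.
rewrite (big_setID (pos_supp G w)) /= (setIidPr (pos_supp_sub G w)) gerDl.
by apply: sumr_le0 => i; rewrite !inE => /andP[] /[swap] -> /=; rewrite -leNgt.
Qed.

Lemma card_le_pos_supp (T : finType) (G : {set T}) (w : {ffun T -> int}) :
  (#|pos_supp G w|)%:Z <= \sum_(i in pos_supp G w) w i.
Proof. by rewrite -natz -sumr_const; apply: ler_sum => i; rewrite inE => /andP[_]; lia. Qed.

Section SplitAtElement.
Variables (T : finType) (F : {set T}) (r : {set T} -> nat) (e : T).
Hypotheses (M : is_matroid F r) (eF : e \in F).
Implicit Type z : {ffun T -> int}.

Lemma notin_setD1 : e \notin F :\ e.
Proof. by rewrite !inE eqxx. Qed.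

Lemma sum_setD1_ffun_set z : \sum_(i in F) z i = z e + \sum_(i in F :\ e) ffun_set z e 0 i.
Proof. by rewrite (big_setD1 e eF) sum_ffun_set // notin_setD1. Qed.

Lemma off_setD1_ffun_set z : (forall i, i \notin F -> z i = 0) <->
  (forall i, i \notin F :\ e -> ffun_set z e 0 i = 0).
Proof.
split=> z0 i.
  by rewrite !inE ffunE negb_and negbK; case: eqVneq => //= _; apply: z0.
have [-> /negP//|ie iF] := eqVneq i e.
by have := z0 i; rewrite ffun_set_neq // !inE ie (negbTE iF); apply.
Qed.

Lemma pos_supp_nonpos z : z e <= 0 -> pos_supp F z = pos_supp (F :\ e) (ffun_set z e 0).
Proof.
move=> ze; apply/setP => i; rewrite !inE ffunE; case: eqVneq => [->|] //=.
by rewrite ltNge ze andbF.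
Qed.

Lemma pos_supp_pos z : 0 < z e -> pos_supp F z = e |: pos_supp (F :\ e) (ffun_set z e 0).
Proof.
by move=> ze; apply/setP => i; rewrite !inE ffunE; case: eqVneq => [->|] //=; rewrite eF ze.
Qed.

Lemma sum_pos_supp_ffun_set z :
  \sum_(i in pos_supp (F :\ e) (ffun_set z e 0)) ffun_set z e 0 i =
  \sum_(i in pos_supp (F :\ e) (ffun_set z e 0)) z i.
Proof. by apply: sum_ffun_set; apply: contra notin_setD1; apply/subsetP/pos_supp_sub. Qed.

Lemma QP_ineq_nonpos t u z : z e <= 0 ->
  QP_ineq F r t u z <->
  exists2 s, (s < t.+1 - (r F - r (F :\ e)))%N &
    QP_ineq (F :\ e) r s u (ffun_set z e 0) /\
    z e = s%:Z + (r F - r (F :\ e))%N%:Z - t%:Z.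
Proof.
move=> ze; set z0 := ffun_set z e 0; set S0 := pos_supp (F :\ e) z0.
have hs := sum_setD1_ffun_set z; have hoff := off_setD1_ffun_set z; rewrite -/z0 in hs hoff.
have hpos : \sum_(i in pos_supp F z) z i = \sum_(i in S0) z0 i.
  by rewrite sum_pos_supp_ffun_set pos_supp_nonpos.
have := rank_setD1_le e M; have := sum_le_pos_supp (F :\ e) z0.
have := rank_mono (is_matroid_del e M) (subxx _) (pos_supp_sub (F :\ e) z0).
rewrite -/z0 -/S0 => rS0 g1 rFe; split.
- move=> [off sz pz]; move: pz; rewrite hpos (pos_supp_nonpos ze) -/z0 -/S0 => pz.
  have sE : (absz ((r (F :\ e))%:Z + u%:Z - \sum_(i in F :\ e) z0 i)%R)%:Z =
            (r (F :\ e))%:Z + u%:Z - \sum_(i in F :\ e) z0 i by apply: gez0_abs; lia.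
  exists (absz ((r (F :\ e))%:Z + u%:Z - \sum_(i in F :\ e) z0 i)%R); last split.
  + by move: sz; rewrite hs; lia.
  + by split; [apply/hoff | rewrite sE; lia | ].
  + by move: sz; rewrite hs; lia.
- move=> [s _ [[off' sz' pz'] ze']]; split; first by apply/hoff.
    by rewrite hs sz' ze'; lia.
  by rewrite hpos (pos_supp_nonpos ze).
Qed.

Lemma QP_ineq_pos t u z : 0 < z e ->
  QP_ineq F r t u z <->
  exists2 v, (v < u + r [set e])%N &
    QP_ineq (F :\ e) (contr_rank r e) t v (ffun_set z e 0) /\
    z e = u%:Z + (r [set e])%:Z - v%:Z.
Proof.
move=> ze; set z0 := ffun_set z e 0; set S0 := pos_supp (F :\ e) z0.
have hs := sum_setD1_ffun_set z; have hoff := off_setD1_ffun_set z; rewrite -/z0 in hs hoff.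
have hpos : \sum_(i in pos_supp F z) z i = z e + \sum_(i in S0) z0 i.
  by rewrite sum_pos_supp_ffun_set pos_supp_pos // big_setU1 //= inE negb_and notin_setD1.
have S0F : S0 \subset F :\ e := pos_supp_sub (F :\ e) z0.
have := rank_setU1_le M eF S0F; have := rank1_le_setU1 M eF S0F.
have := rank_le_card (is_matroid_del e M) S0F; have := card_le_pos_supp (F :\ e) z0.
have cF : contr_rank r e (F :\ e) = (r F - r [set e])%N by rewrite /contr_rank setD1K.
have eF1 : [set e] \subset F by rewrite sub1set.
have := rank_mono M (subxx F) eF1; rewrite -/z0 -/S0 => rF g2 cS0 eS0 S0e; split.
- move=> [off sz pz]; move: pz; rewrite hpos (pos_supp_pos ze) -/z0 -/S0 => pz.
  have vE : (absz (u%:Z + (r [set e])%:Z - z e)%R)%:Z = u%:Z + (r [set e])%:Z - z e.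
    by apply: gez0_abs; lia.
  exists (absz (u%:Z + (r [set e])%:Z - z e)%R); first by lia.
  split; last by lia.
  split; [by apply/hoff | by rewrite cF vE; move: sz; rewrite hs; lia | ].
  by rewrite /contr_rank vE -/S0; lia.
- move=> [v _ [[off' sz' pz'] ze']]; split; first by apply/hoff.
    by move: sz'; rewrite cF hs ze'; lia.
  by move: pz'; rewrite hpos (pos_supp_pos ze) /contr_rank ze' -/S0; lia.
Qed.

End SplitAtElement.

(* Splitting by the sign of z e: points with z e <= 0 are fibred over points of the
   deletion, those with z e > 0 over points of the contraction. *)
Lemma counts_QP_ineq_del_contr (T : finType) (F : {set T}) (r : {set T} -> nat) (e : T)
    (fD fC : nat -> nat -> rat) t u :
  is_matroid F r -> e \in F ->
  (forall s v, counts (QP_ineq (F :\ e) r s v) (fD s v)) ->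
  (forall s v, counts (QP_ineq (F :\ e) (contr_rank r e) s v) (fC s v)) ->
  counts (QP_ineq F r t u)
    (\sum_(s < t.+1 - (r F - r (F :\ e))) fD s u + \sum_(v < u + r [set e]) fC t v).
Proof.
move=> M eF cD cC.
have vanish r' s v w : QP_ineq (F :\ e) r' s v w -> w e = 0.
  by case=> off _ _; apply: off; apply: notin_setD1.
apply: (counts_ext (P := fun z =>
  (exists2 s, (s < t.+1 - (r F - r (F :\ e)))%N & QP_ineq (F :\ e) r s u (ffun_set z e 0) /\
     z e = s%:Z + (r F - r (F :\ e))%N%:Z - t%:Z) \/
  (exists2 v, (v < u + r [set e])%N & QP_ineq (F :\ e) (contr_rank r e) t v (ffun_set z e 0) /\
     z e = u%:Z + (r [set e])%:Z - v%:Z))).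
  move=> z; have [ze|ze] := lerP (z e) 0.
    rewrite (QP_ineq_nonpos M eF _ _ ze); split=> [[//|[v vl [_ ze']]]|]; last by left.
    by move: ze; rewrite ze'; lia.
  rewrite (QP_ineq_pos M eF _ _ ze); split=> [[[s sl [_ ze']]|//]|]; last by right.
  by move: ze; rewrite ze'; lia.
apply: counts_or.
- by move=> z [s sl [_ ->]] [v vl [_]]; lia.
- apply: (counts_bigor (P := fun s z => QP_ineq (F :\ e) r s u (ffun_set z e 0) /\
                                         z e = s%:Z + (r F - r (F :\ e))%N%:Z - t%:Z)
                       (q := fun s => fD s u)).
    by move=> s _; apply: counts_ffun_set (@vanish r s u) (cD s u).
  by move=> s s' z [_ ->] [_]; lia.
- apply: (counts_bigor (P := fun v z => QP_ineq (F :\ e) (contr_rank r e) t v (ffun_set z e 0) /\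
                                         z e = u%:Z + (r [set e])%:Z - v%:Z)
                       (q := fun v => fC t v)).
    by move=> v _; apply: counts_ffun_set (@vanish _ t v) (cC t v).
  by move=> v v' z [_ ->] [_]; lia.
Qed.

(** * Deletion-contraction for Q' *)

Lemma Q_expansion_counts (R : realFieldType) (T : finType) (G : {set T})
    (r : {set T} -> nat) d c :
  is_matroid G r -> G != set0 -> Q_expansion R G r d c ->
  forall t u, counts (QP_ineq G r t u) (binom_eval d c t u).
Proof. by move=> MG G0 Q t u; apply: counts_ext (Q t u) => z; apply: in_QPE. Qed.

Section Expansions.
Variables (R : realFieldType) (T : finType) (F : {set T}) (r : {set T} -> nat) (e : T).
Hypotheses (M : is_matroid F r) (eF : e \in F) (Fe0 : F :\ e != set0).
Variables (dM dD dC : nat) (cM cD cC : nat -> nat -> rat).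
Hypotheses (QM : Q_expansion R F r dM cM) (QD : Q_expansion R (F :\ e) r dD cD)
           (QC : Q_expansion R (F :\ e) (contr_rank r e) dC cC).

Lemma binom_eval_del_contr t u :
  binom_eval dM cM t u =
  \sum_(s < t.+1 - (r F - r (F :\ e))) binom_eval dD cD s u +
  \sum_(v < u + r [set e]) binom_eval dC cC t v.
Proof.
have F0 : F != set0 by apply/set0Pn; exists e.
apply: counts_unique (Q_expansion_counts M F0 QM t u) _.
apply: counts_QP_ineq_del_contr M eF _ _ => s v.
  exact: (Q_expansion_counts (is_matroid_del e M) Fe0 QD s v).
exact: (Q_expansion_counts (is_matroid_contr M eF) Fe0 QC s v).
Qed.

Lemma Qprime_ordinary : ~ is_loop r e -> ~ is_coloop F r e ->
  Qprime dM cM = varx * Qprime dD cD + vary * Qprime dC cC.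
Proof.
move=> nl nc; have [e1 rF] := ordinary_rank M eF nl nc.
have QDC := is_QprimeD (is_Qprime_sum_t (is_Qprime_Qprime dD cD))
                       (is_Qprime_sum_u (is_Qprime_Qprime dC cC)).
apply: (is_Qprime_unique (is_Qprime_Qprime dM cM) (is_Qprime_ext _ QDC)) => t u.
by rewrite binom_eval_del_contr rF subnn subn0 e1 addn1.
Qed.

Hypothesis le_ce : is_loop r e \/ is_coloop F r e.

Lemma binom_eval_del_eq_contr t u : binom_eval dD cD t u = binom_eval dC cC t u.
Proof.
apply: counts_unique (Q_expansion_counts (is_matroid_del e M) Fe0 QD t u) _.
apply: counts_ext (Q_expansion_counts (is_matroid_contr M eF) Fe0 QC t u) => z.
by apply: QP_ineq_ext => X XF; apply: (contr_rank_loop_coloop M eF le_ce XF).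
Qed.

Lemma Qprime_del_eq_contr : Qprime dD cD = Qprime dC cC.
Proof.
apply: (is_Qprime_unique _ (is_Qprime_Qprime dC cC)).
exact: (is_Qprime_ext binom_eval_del_eq_contr (is_Qprime_Qprime dD cD)).
Qed.

Lemma Qprime_loop_coloop : Qprime dM cM = (varx + vary - 1) * Qprime dC cC.
Proof.
have QC1 := is_Qprime_xy1 (is_Qprime_Qprime dC cC).
apply: (is_Qprime_unique (is_Qprime_Qprime dM cM) (is_Qprime_ext _ QC1)) => t u.
have sumDC n : \sum_(s < n) binom_eval dD cD s u = \sum_(s < n) binom_eval dC cC s u.
  by apply: eq_bigr => s _; rewrite binom_eval_del_eq_contr.
rewrite binom_eval_del_contr sumDC; case: le_ce => [le|ce].
  rewrite (loop_rank M eF le) subnn subn0 le addn0.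
  by rewrite [\sum_(v < u.+1) _]big_ord_recr /= addrA addrK.
have [e1 rF] := coloop_rank M eF ce.
by rewrite e1 rF subSnn subn1 addn1 [\sum_(s < t.+1) _]big_ord_recr /= addrAC addrK.
Qed.

End Expansions.

Theorem mainTheorem4 (R : realFieldType) (T : finType) (F : {set T})
    (r : {set T} -> nat) (e : T)
    (dM dD dC : nat) (cM cD cC : nat -> nat -> rat) :
  is_matroid F r -> (2 <= #|F|)%N -> e \in F ->
  Q_expansion R F r dM cM ->
  Q_expansion R (F :\ e) r dD cD ->
  Q_expansion R (F :\ e) (contr_rank r e) dC cC ->
  (~ is_loop r e -> ~ is_coloop F r e ->
     Qprime dM cM = varx * Qprime dD cD + vary * Qprime dC cC) /\
  (is_loop r e \/ is_coloop F r e ->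
     Qprime dM cM = (varx + vary - 1) * Qprime dC cC /\
     Qprime dM cM = (varx + vary - 1) * Qprime dD cD).
Proof.
move=> M F2 eF QM QD QC.
have Fe0 : F :\ e != set0 by rewrite -card_gt0; move: F2; rewrite (cardsD1 e F) eF; lia.
split; first exact: (Qprime_ordinary M eF Fe0 QM QD QC).
move=> le_ce; rewrite (Qprime_del_eq_contr M eF Fe0 QD QC le_ce).
by have := Qprime_loop_coloop M eF Fe0 QM QD QC le_ce.
Qed.
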